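(* Let $\omega\ge1$ and $n>2$ be integers with $n<2^\omega$, $r=2^\omega$, $R=2^{\omega n}$, let $p$ be a positive integer with $p<R$, let $r^{-1}$ be a positive integer with $rr^{-1}\equiv1\pmod p$, and $p'=(rr^{-1}-1)/p$. Let $T$ be an integer with $0\le T<pR$, $T_i=\lfloor T/r^{i-1}\rfloor\bmod r$, and for $1\le i\le n-2$ let $M_i\in\{0,\dots,p-1\}$ with $M_i\equiv r^{-n+i+1}\pmod p$ and $H_i=T_iM_i$. Let $T^{(n-2)}=\lfloor T/r^{n-2}\rfloor+\sum_{i=1}^{n-2}H_i$, and for $i=n-1,n$ let $Q_i=(T^{(i-1)}p')\bmod r$ and $T^{(i)}=(T^{(i-1)}+Q_ip)/r$. Then $T^{(n)}<3p$.
   Context: Negative powers of $r$ denote powers of the inverse of $r$ modulo $p$. *)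

From mathcomp Require Export all_boot.

(* Only sizes matter, not the congruences: a Montgomery step (x + q p) / r with
   q < r maps the range x < p m r to p (m + 1).  The folded digits contribute
   fewer than (n - 2) r p to T^(n-2), which with the high part below p r^2 gives
   T^(n-2) < p (r + n - 2) r, hence T^(n-1) < p (r + n - 1) <= 2 p r since
   n < r, and finally T^(n) < 3 p. *)
From mathcomp Require Import all_boot.
From mathcomp Require Import zify.

Set Implicit Arguments.
Unset Strict Implicit.

Lemma redc_step_lt (p r m x q : nat) :
  q < r -> x < p * m * r -> (x + q * p) %/ r < p * m.+1.
Proof.
move=> lt_qr lt_x; have r_gt0 : 0 < r := leq_ltn_trans (leq0n q) lt_qr.
rewrite ltn_divLR // mulnSr mulnDl -addSn; apply: (leq_add lt_x).
by rewrite mulnC leq_mul2l (ltnW lt_qr) orbT.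
Qed.

Lemma divn_expn_lt (p r k m T : nat) :
  0 < r -> T < p * r ^ (k + m) -> T %/ r ^ k < p * r ^ m.
Proof.
by move=> r_gt0 lt_T; rewrite ltn_divLR ?expn_gt0 ?r_gt0 // -mulnA -expnD addnC.
Qed.

Lemma sum_nat_le_const (a b c : nat) (F : nat -> nat) :
  (forall i, a <= i < b -> F i <= c) -> \sum_(a <= i < b) F i <= (b - a) * c.
Proof.
move=> le_F; rewrite -sum_nat_const_nat big_nat [X in _ <= X]big_nat.
exact: leq_sum.
Qed.

Theorem lemma5 (w n p rinv T : nat) (M : nat -> nat) :
  1 <= w -> 2 < n -> n < 2 ^ w ->
  0 < p -> p < 2 ^ (w * n) ->
  0 < rinv -> 2 ^ w * rinv = 1 %[mod p] ->
  T < p * 2 ^ (w * n) ->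
  (forall i, 1 <= i <= n - 2 -> M i < p /\ M i = rinv ^ (n - i - 1) %[mod p]) ->
  let r := 2 ^ w in
  let p' := (r * rinv - 1) %/ p in
  let T_ i := (T %/ r ^ (i - 1)) %% r in
  let H i := T_ i * M i in
  let Tn2 := T %/ r ^ (n - 2) + \sum_(1 <= i < n - 1) H i in
  let Qn1 := (Tn2 * p') %% r in
  let Tn1 := (Tn2 + Qn1 * p) %/ r in
  let Qn := (Tn1 * p') %% r in
  let Tn := (Tn1 + Qn * p) %/ r in
  Tn < 3 * p.
Proof.
move=> _ lt2n lt_nr _ _ _ _ lt_T le_M; cbv zeta beta.
set r := 2 ^ w in lt_nr *; set Tn2 := T %/ _ + _; set Tn1 := (Tn2 + _) %/ r.
have r_gt0 : 0 < r by rewrite expn_gt0.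
have lt_high : T %/ r ^ (n - 2) < p * r ^ 2.
  by apply: divn_expn_lt => //; rewrite subnK ?(ltnW lt2n) // /r -expnM.
have le_sum :
    \sum_(1 <= i < n - 1) (T %/ r ^ (i - 1)) %% r * M i <= (n - 1 - 1) * (r * p).
  apply: sum_nat_le_const => i /andP [le1i lt_i].
  have [lt_Mi _] := le_M i ltac:(lia).
  exact: leq_mul (ltnW (ltn_pmod _ r_gt0)) (ltnW lt_Mi).
have lt_Tn2 : Tn2 < p * (r + (n - 2)) * r.
  apply: leq_trans (leq_add lt_high le_sum) _.
  rewrite -subnDA add1n mulnDr mulnDl -mulnA -mulnn.
  by rewrite [(n - 2) * _]mulnC [r * p]mulnC mulnAC.
have lt_Tn1 : Tn1 < p * 2 * r.
  rewrite /Tn1; apply: leq_trans (redc_step_lt (ltn_pmod _ r_gt0) lt_Tn2) _.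
  rewrite -mulnA leq_mul2l mul2n -addnn ltn_add2l.
  by rewrite (leq_ltn_trans (leq_subr 2 n) lt_nr) orbT.
by rewrite [3 * p]mulnC; exact: redc_step_lt (ltn_pmod _ r_gt0) lt_Tn1.
Qed.
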